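(* For the representation of a symmetric subgroup $T_m(\mathbb{C})\le G\le\mathrm{GL}_m(\mathbb{C})$ on $\mathbb{C}^{m\times n}\otimes\mathbb{C}^{n\times m}$ given by $X\cdot(A\otimes B)=XA\otimes BX^{-1}$, the weight norm equals $N_l=\sqrt2$ and the weight margin satisfies $\gamma_l\ge m^{-3/2}$.
   Context: $T_m(\mathbb{C})$: invertible diagonal matrices; symmetric: Zariski closed and closed under conjugate transposition. For a rational representation $\pi$ of $G$ with weight set $\Omega(\pi)\subset\mathbb{Z}^m$ (the characters $\omega$ such that $\mathrm{diag}(t)$ acts on a weight vector by $t_1^{\omega_1}\cdots t_m^{\omega_m}$), the weight norm is $N(\pi)=\max_{\omega\in\Omega(\pi)}\|\omega\|_2$ and the weight margin is $\gamma(\pi)=\min\{\mathrm{dist}(0,\mathrm{conv}(S)):S\subseteq\Omega(\pi),\ 0\notin\mathrm{conv}(S)\}$, where $\mathrm{dist}(0,\mathrm{conv}(S))$ is the Euclidean distance from the origin to the convex hull. *)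

From HB Require Import structures.
From mathcomp Require Import all_boot all_order all_algebra.
From mathcomp Require Import complex.
From mathcomp Require Import all_classical all_reals all_analysis.

Set Implicit Arguments.
Unset Strict Implicit.
Unset Printing Implicit Defensive.

Import Order.TTheory GRing.Theory Num.Theory.
Local Open Scope ring_scope.
Local Open Scope classical_set_scope.
Local Open Scope complex_scope.

Section Defs.
Variable R : realType.
Notation C := (R[i]).

Inductive mxpoly_expr (m : nat) : Type :=
| PCst of C
| PEnt of 'I_m & 'I_m
| PAdd of mxpoly_expr m & mxpoly_expr m
| PMul of mxpoly_expr m & mxpoly_expr m.

Fixpoint mxpoly_eval (m : nat) (p : mxpoly_expr m) (X : 'M[C]_m) : C :=
  match p with
  | PCst c => c
  | PEnt i j => X i j
  | PAdd p q => mxpoly_eval p X + mxpoly_eval q X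
  | PMul p q => mxpoly_eval p X * mxpoly_eval q X
  end.

Definition zariski_closed_GL (m : nat) (G : set 'M[C]_m) : Prop :=
  exists P : set (mxpoly_expr m),
    G = [set X | X \in unitmx /\ forall p, P p -> mxpoly_eval p X = 0].

Definition conj_transpose (m : nat) (X : 'M[C]_m) : 'M[C]_m :=
  (map_mx (fun z : C => z^*) X)^T.

Definition is_subgroup_GL (m : nat) (G : set 'M[C]_m) : Prop :=
  [/\ forall X, G X -> X \in unitmx,
      G 1%:M,
      forall X Y, G X -> G Y -> G (X *m Y)
    & forall X, G X -> G (invmx X)].

Definition symmetric_subgroup (m : nat) (G : set 'M[C]_m) : Prop :=
  [/\ is_subgroup_GL G, zariski_closed_GL G
    & forall X, G X -> G (conj_transpose X)].

Definition contains_torus (m : nat) (G : set 'M[C]_m) : Prop :=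
  forall t : 'rV[C]_m, (forall i, t 0 i != 0) -> G (diag_mx t).

(* A tensor T is given by its coordinates: T i j k l is the coefficient of
   E_ij (x) E_kl, so that A (x) B has coordinates A i j * B k l. *)
Definition tensor (m n : nat) := 'I_m -> 'I_n -> 'I_n -> 'I_m -> C.

(* X . (A (x) B) = X A (x) B X^{-1}, extended linearly *)
Definition tens_act (m n : nat) (X : 'M[C]_m) (T : tensor m n) : tensor m n :=
  fun i j k l => \sum_(i' < m) \sum_(l' < m) X i i' * T i' j k l' * invmx X l' l.

Definition weight_set (m n : nat) : set 'rV[int]_m :=
  [set w | exists T : tensor m n,
     (exists i j k l, T i j k l != 0) /\
     forall t : 'rV[C]_m, (forall i, t 0 i != 0) ->
       forall i j k l,
         tens_act (diag_mx t) T i j k l = (\prod_(a < m) t 0 a ^ w 0 a) * T i j k l].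

Definition realvec (m : nat) (w : 'rV[int]_m) : 'rV[R]_m := map_mx (fun z : int => z%:~R) w.

Definition enorm (m : nat) (x : 'rV[R]_m) : R := Num.sqrt (\sum_(a < m) x 0 a ^+ 2).

Definition conv_hull (m : nat) (S : seq 'rV[R]_m) : set 'rV[R]_m :=
  [set x | exists lam : 'I_(size S) -> R,
     [/\ forall a, 0 <= lam a, \sum_a lam a = 1 & x = \sum_a lam a *: S`_a]].

Definition dist0_conv (m : nat) (S : seq 'rV[R]_m) : R :=
  inf [set enorm x | x in conv_hull S].

Definition weight_norm (m n : nat) : R :=
  sup [set enorm (realvec w) | w in @weight_set m n].

(* subsets S of the weight set are represented by (nonempty) lists of weights *)
Definition weight_margin (m n : nat) : R :=
  inf [set dist0_conv (map (@realvec m) S) |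
        S in [set S : seq 'rV[int]_m |
                [/\ S != [::], forall s, s \in S -> @weight_set m n s
                  & ~ conv_hull (map (@realvec m) S) 0]]].

End Defs.

From HB Require Import structures.
From mathcomp Require Import all_boot all_order all_algebra.
From mathcomp Require Import complex.
From mathcomp Require Import all_classical all_reals all_analysis.
From mathcomp Require Import ring lra.
Import Order.TTheory GRing.Theory Num.Theory.
Local Open Scope ring_scope.

(* The torus T_m acts on E_ij (x) E_kl by t_i / t_l, so every weight is
   e_i - e_l, and e_0 - e_1 occurs: the weight norm is sqrt 2.  For the
   margin, read a set S of weights e_i - e_l with 0 outside conv S as a
   digraph on 'I_m with arcs i -> l.  A directed cycle would sum to 0, so
   the digraph is acyclic and the number q u of vertices reaching u is a
   potential with q i + 1 <= q l on every arc and 0 <= q <= m.  Hence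
   <x, -q> >= 1 for x in conv S, and Cauchy-Schwarz with |q|^2 <= m^3
   gives |x| >= m^(-3/2). *)

Section CauchySchwarz.
Variables (R : realFieldType) (m : nat).

Lemma cauchy_schwarz (x y : 'I_m -> R) :
  (\sum_b x b * y b) ^+ 2 <= (\sum_b x b ^+ 2) * (\sum_b y b ^+ 2).
Proof.
set X := \sum_b x b ^+ 2; set Y := \sum_b y b ^+ 2; set D := \sum_b x b * y b.
have lagrange : \sum_b \sum_c (x b * y c - x c * y b) ^+ 2 = 2 * (X * Y - D ^+ 2).
  have term b c : (x b * y c - x c * y b) ^+ 2 =
      x b ^+ 2 * y c ^+ 2 + y b ^+ 2 * x c ^+ 2 - 2 * ((x b * y b) * (x c * y c)).
    by ring.
  under eq_bigr do under eq_bigr do rewrite term.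
  rewrite /X /Y /D expr2 !big_distrlr /=; under eq_bigr do rewrite !big_split /=.
  rewrite !big_split /=.
  have swap : \sum_b \sum_c y b ^+ 2 * x c ^+ 2 = \sum_b \sum_c x b ^+ 2 * y c ^+ 2.
    rewrite exchange_big; apply: eq_bigr => b _.
    by apply: eq_bigr => c _; rewrite mulrC.
  have neg : \sum_b \sum_c - (2 * ((x b * y b) * (x c * y c))) =
      - (2 * \sum_b \sum_c (x b * y b) * (x c * y c)).
    rewrite mulr_sumr -sumrN; apply: eq_bigr => b _.
    by rewrite mulr_sumr -sumrN.
  by rewrite swap neg; ring.
have : 0 <= 2 * (X * Y - D ^+ 2).
  by rewrite -lagrange; do 2 (apply: sumr_ge0 => ? _); apply: sqr_ge0.
by rewrite pmulr_rge0 // subr_ge0.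
Qed.

Lemma inv_le_sumsq_of_dot_ge1 (x y : 'I_m -> R) (c : R) :
  1 <= \sum_b x b * y b -> \sum_b y b ^+ 2 <= c -> c^-1 <= \sum_b x b ^+ 2.
Proof.
move=> dot_ge1 Y_le_c.
have X_ge0 : 0 <= \sum_b x b ^+ 2 by apply: sumr_ge0 => b _; apply: sqr_ge0.
have Y_ge0 : 0 <= \sum_b y b ^+ 2 by apply: sumr_ge0 => b _; apply: sqr_ge0.
have XY_ge1 : 1 <= (\sum_b x b ^+ 2) * (\sum_b y b ^+ 2).
  apply: le_trans (cauchy_schwarz x y).
  by rewrite -[leLHS](expr1n _ 2) lerXn2r // ?nnegrE // (le_trans ler01).
have Xc_ge1 : 1 <= c * \sum_b x b ^+ 2 by nra.
have c_gt0 : 0 < c by nra.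
by rewrite -[leLHS]mulr1 ler_pdivrMl.
Qed.

End CauchySchwarz.

Section ConvexMean.
Variables (R : realType) (m : nat) (S : seq 'rV[R]_m).
Local Notation k := (size S).

Lemma sum_count_mem_scale (L : seq 'I_k) :
  \sum_a (count_mem a L)%:R *: S`_a = \sum_(j <- L) S`_j.
Proof.
elim: L => [|x L IH] /=; first by rewrite big_nil big1 // => a _; rewrite scale0r.
rewrite big_cons -IH; under eq_bigr do rewrite natrD scalerDl.
rewrite big_split /= (bigD1 x) //= eqxx scale1r big1 ?addr0 // => b /negbTE.
by rewrite eq_sym => ->; rewrite scale0r.
Qed.

Lemma sum_count_mem (L : seq 'I_k) :
  \sum_a (count_mem a L)%:R = (size L)%:R :> R.
Proof.
elim: L => [|x L IH] /=; first by rewrite big1.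
under eq_bigr do rewrite natrD.
rewrite big_split /= IH (bigD1 x) //= eqxx big1 ?addr0 -?natrD // => b /negbTE.
by rewrite eq_sym => ->.
Qed.

Lemma conv_hull_mean (L : seq 'I_k) : L != [::] ->
  conv_hull S ((size L)%:R^-1 *: \sum_(j <- L) S`_j).
Proof.
move=> L_neq0; have size_neq0 : (size L)%:R != 0 :> R.
  by rewrite pnatr_eq0 size_eq0.
exists (fun a => (count_mem a L)%:R / (size L)%:R); split.
- by move=> a; rewrite divr_ge0 ?ler0n.
- by rewrite -mulr_suml sum_count_mem divff.
- rewrite -sum_count_mem_scale scaler_sumr.
  by apply: eq_bigr => a _; rewrite scalerA mulrC.
Qed.

End ConvexMean.

Section WeightDigraph.
Variables (R : realType) (m : nat).

Definition edge_vec (i l : 'I_m) : 'rV[R]_m :=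
  \row_b ((b == i)%:R - (b == l)%:R).

Lemma edge_vec_trans (i j l : 'I_m) :
  edge_vec i j + edge_vec j l = edge_vec i l.
Proof. by apply/rowP => b; rewrite !mxE; ring. Qed.

Lemma edge_vec_diag (i : 'I_m) : edge_vec i i = 0.
Proof. by apply/rowP => b; rewrite !mxE subrr. Qed.

Lemma sum_delta_mul (s : 'I_m) (F : 'I_m -> R) :
  \sum_b (b == s)%:R * F b = F s.
Proof.
by rewrite (bigD1 s) //= eqxx mul1r big1 ?addr0 // => b /negbTE ->; rewrite mul0r.
Qed.

Variables (S : seq 'rV[R]_m) (src dst : 'I_(size S) -> 'I_m).
Hypothesis S_edges : forall a : 'I_(size S), S`_a = edge_vec (src a) (dst a).
Hypothesis zero_notin_conv : ~ conv_hull S 0.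

Definition arc : rel 'I_m :=
  fun i l => [exists a, (src a == i) && (dst a == l)].

Lemma arc_path_sum (u : 'I_m) (p : seq 'I_m) : path arc u p ->
  exists L : seq 'I_(size S), \sum_(j <- L) S`_j = edge_vec u (last u p).
Proof.
elim: p u => [|w p IH] u /=; first by exists [::]; rewrite big_nil edge_vec_diag.
case/andP => /existsP [a /andP [/eqP src_a /eqP dst_a]] /IH [L sumL].
by exists (a :: L); rewrite big_cons sumL S_edges src_a dst_a edge_vec_trans.
Qed.

Lemma arc_acyclic (a : 'I_(size S)) : ~~ connect arc (dst a) (src a).
Proof.
apply/negP => /connectP [p arc_p last_p].
have [L sumL] := arc_path_sum _ _ arc_p.
have cycle_sum : \sum_(j <- a :: L) S`_j = 0.
  by rewrite big_cons sumL -last_p S_edges edge_vec_trans edge_vec_diag.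
by apply: zero_notin_conv; have := @conv_hull_mean _ _ S (a :: L) isT;
  rewrite cycle_sum scaler0.
Qed.

Definition potential (u : 'I_m) : nat := #|[set w | connect arc w u]|.

Lemma potential_lt (a : 'I_(size S)) :
  (potential (src a) < potential (dst a))%N.
Proof.
apply/proper_card/properP; split.
  apply/fintype.subsetP => w; rewrite !inE => /connect_trans; apply.
  by apply/connect1/existsP; exists a; rewrite !eqxx.
by exists (dst a); rewrite inE ?connect0 ?arc_acyclic.
Qed.

Lemma potential_le (u : 'I_m) : (potential u <= m)%N.
Proof. by rewrite /potential -[X in (_ <= X)%N]card_ord max_card. Qed.

Lemma conv_hull_dot_potential (x : 'rV[R]_m) : conv_hull S x ->
  1 <= \sum_b x 0 b * - (potential b)%:R.
Proof.
case=> lam [lam_ge0 lam_sum1 ->].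
have xE b : (\sum_a lam a *: S`_a) 0 b = \sum_a lam a * S`_a 0 b.
  by rewrite summxE; apply: eq_bigr => a _; rewrite mxE.
have dotE : \sum_b (\sum_a lam a *: S`_a) 0 b * - (potential b)%:R =
    \sum_a lam a * ((potential (dst a))%:R - (potential (src a))%:R).
  under eq_bigr do rewrite xE mulr_suml.
  rewrite exchange_big /=; apply: eq_bigr => a _.
  under eq_bigr do rewrite -mulrA.
  rewrite -mulr_sumr S_edges; congr (_ * _).
  under eq_bigr do rewrite mxE mulrBl.
  by rewrite sumrB !sum_delta_mul; ring.
rewrite dotE -[leLHS]lam_sum1 ler_sum // => a _.
rewrite -[leLHS]mulr1 ler_wpM2l // lerBrDr addrC natr1 ler_nat.
exact: potential_lt.
Qed.

Lemma conv_hull_sumsq_ge (x : 'rV[R]_m) :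
  conv_hull S x -> (m%:R ^+ 3)^-1 <= \sum_b x 0 b ^+ 2.
Proof.
move=> /conv_hull_dot_potential /inv_le_sumsq_of_dot_ge1; apply.
rewrite exprSr mulr_natr -[X in _ *+ X]card_ord -sumr_const.
apply: ler_sum => b _; rewrite sqrrN -!natrX ler_nat leq_exp2r //.
exact: potential_le.
Qed.

End WeightDigraph.
Arguments edge_vec R {m}.

Section Weights.
Variables (R : realType) (m n : nat).
Local Notation C := (R[i]).
Local Open Scope complex_scope.

Definition edge_weight (i l : 'I_m) : 'rV[int]_m :=
  \row_a ((a == i)%:Z - (a == l)%:Z).

Lemma realvec_edge_weight (i l : 'I_m) :
  realvec R (edge_weight i l) = edge_vec R i l.
Proof. by apply/rowP => a; rewrite !mxE intrB. Qed.

Lemma enorm_edge_vec (i l : 'I_m) :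
  enorm (edge_vec R i l) = if i == l then 0 else Num.sqrt 2.
Proof.
rewrite /enorm; case: eqVneq => [<-|i_neq_l].
  by rewrite big1 ?sqrtr0 // => a _; rewrite mxE subrr expr0n.
congr Num.sqrt; transitivity (\sum_a ((a == i)%:R * 1 + (a == l)%:R * 1) : R).
  apply: eq_bigr => a _; rewrite mxE !mulr1.
  case: eqVneq => [->|_]; case: eqVneq => [a_l|_] //=.
  - by move: i_neq_l; rewrite a_l eqxx.
  - by rewrite subr0 expr1n addr0.
  - by rewrite sub0r sqrrN expr1n add0r.
  - by rewrite subr0 expr0n addr0.
by rewrite big_split /= !sum_delta_mul.
Qed.

Lemma invmx_diag (t : 'rV[C]_m) : (forall i, t 0 i != 0) ->
  invmx (diag_mx t) = diag_mx (\row_i (t 0 i)^-1).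
Proof.
move=> t_neq0.
have mul_inv : diag_mx t *m diag_mx (\row_i (t 0 i)^-1) = 1%:M.
  apply/matrixP => i j; rewrite mul_diag_mx !mxE.
  by case: eqVneq => [->|_]; rewrite ?mulr0n ?mulr0 // !mulr1n divff.
have [t_unit _] := mulmx1_unit mul_inv.
by rewrite -[RHS](mulKmx t_unit) mul_inv mulmx1.
Qed.

Lemma tens_act_diag (t : 'rV[C]_m) (T : tensor R m n) i j k l :
  (forall i, t 0 i != 0) ->
  tens_act (diag_mx t) T i j k l = t 0 i * T i j k l * (t 0 l)^-1.
Proof.
move=> t_neq0; rewrite /tens_act invmx_diag //.
rewrite (bigD1 i) //= [X in _ + X]big1 ?addr0 => [|i' /negbTE i'_neq]; last first.
  by apply: big1 => l' _; rewrite mxE eq_sym i'_neq mulr0n !mul0r.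
rewrite (bigD1 l) //= [X in _ + X]big1 ?addr0 => [|l' /negbTE l'_neq]; last first.
  by rewrite [diag_mx _ l' l]mxE l'_neq mulr0n mulr0.
by rewrite !mxE !eqxx !mulr1n.
Qed.

Lemma prod_expz_edge_weight (t : 'rV[C]_m) (i l : 'I_m) :
  (forall i, t 0 i != 0) ->
  \prod_a t 0 a ^ edge_weight i l 0 a = t 0 i * (t 0 l)^-1.
Proof.
move=> t_neq0; under eq_bigr do rewrite mxE.
case: (eqVneq i l) => [<-|i_neq_l].
  by rewrite divff // big1 // => a _; rewrite subrr expr0z.
rewrite (bigD1 i) //= (bigD1 l) /=; last by rewrite eq_sym.
rewrite big1 ?mulr1 => [|a /andP [a_i a_l]]; last first.
  by rewrite (negbTE a_i) (negbTE a_l) expr0z.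
by rewrite eqxx (negbTE i_neq_l) eq_sym (negbTE i_neq_l) eqxx subr0 sub0r
  expr1z exprN1.
Qed.

Lemma expz2_inj : injective (fun z : int => (2 : C) ^ z).
Proof.
move=> a b /=; have -> : (2 : C) = (2 : R)%:C by rewrite rmorph_nat.
rewrite -!fmorphXz => /fmorph_inj; apply: ieexprIz; first by rewrite ltr0n.
by apply/negP => /eqP; lra.
Qed.

(* Testing against the torus element with t_c = 2 and t_a = 1 elsewhere
   isolates the c-th coordinate of the weight. *)
Lemma weight_setP (w : 'rV[int]_m) :
  @weight_set R m n w -> exists i l, w = edge_weight i l.
Proof.
case=> T [[i [j [k [l T_neq0]]]] T_weight]; exists i, l; apply/rowP => c.
pose t : 'rV[C]_m := \row_a (if a == c then 2 else 1).
have t_neq0 a : t 0 a != 0.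
  by rewrite mxE; case: ifP => _; rewrite ?oner_eq0 ?pnatr_eq0.
have prod_t (f : 'I_m -> int) : \prod_a t 0 a ^ f a = 2 ^ f c.
  rewrite (bigD1 c) //= big1 ?mulr1 => [|a /negbTE a_neq_c].
    by rewrite mxE eqxx.
  by rewrite mxE a_neq_c exp1rz.
have := T_weight t t_neq0 i j k l; rewrite tens_act_diag // => act_eq.
have : \prod_a t 0 a ^ edge_weight i l 0 a = \prod_a t 0 a ^ w 0 a.
  rewrite prod_expz_edge_weight //; apply: (mulIf T_neq0).
  by rewrite -act_eq mulrAC.
by rewrite !prod_t => /expz2_inj.
Qed.

Lemma edge_weight_in_weight_set (i l : 'I_m) : (0 < n)%N ->
  @weight_set R m n (edge_weight i l).
Proof.
move=> n_gt0; pose j0 : 'I_n := Ordinal n_gt0.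
exists (fun i' j k l' => if (i' == i) && (l' == l) then 1 else 0); split.
  by exists i, j0, j0, l; rewrite !eqxx oner_eq0.
move=> t t_neq0 i' j k l'; rewrite tens_act_diag //.
case: ifP => [/andP [/eqP -> /eqP ->]|_]; last by rewrite mulr0 mul0r mulr0.
by rewrite prod_expz_edge_weight // !mulr1.
Qed.

End Weights.
Arguments edge_weight {m}.
Arguments weight_setP {R m n w}.

Lemma conv_hull_nth0 (R : realType) (m : nat) (S : seq 'rV[R]_m) :
  (0 < size S)%N -> conv_hull S S`_0.
Proof.
move=> S_gt0; exists (fun a => (a == Ordinal S_gt0)%:R); split.
- by move=> a; rewrite ler0n.
- by rewrite (bigD1 (Ordinal S_gt0)) //= big1 ?addr0 // => a /negbTE ->.
- rewrite (bigD1 (Ordinal S_gt0)) //= scale1r big1 ?addr0 // => a /negbTE ->.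
  by rewrite scale0r.
Qed.

Lemma conv_hull1 (R : realType) (m : nat) (r x : 'rV[R]_m) :
  conv_hull [:: r] x -> x = r.
Proof. by case=> lam [_]; rewrite !big_ord1 => -> ->; rewrite scale1r. Qed.

Lemma sqr_powR_neg3half (R : realType) (m : nat) :
  ((m%:R : R) `^ (- (3 / 2))) ^+ 2 = (m%:R ^+ 3)^-1.
Proof.
rewrite -powR_mulrn ?ler0n // -powRrM.
have -> : - (3 / 2) * 2%:R = - 3%:R :> R by field.
by rewrite powRN powR_mulrn ?ler0n.
Qed.

Section NormAndMargin.
Variables (R : realType) (m n : nat).
Hypotheses (m_ge2 : (2 <= m)%N) (n_gt0 : (0 < n)%N).

Let i0 : 'I_m := Ordinal (ltnW m_ge2).
Let i1 : 'I_m := Ordinal m_ge2.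

Lemma weight_normE : weight_norm R m n = Num.sqrt 2.
Proof.
rewrite /weight_norm; set E := (X in sup X).
have sqrt2_ub : ubound E (Num.sqrt 2).
  move=> _ [_ /weight_setP [i [l ->]] <-].
  rewrite realvec_edge_weight enorm_edge_vec.
  by case: ifP => // _; apply: sqrtr_ge0.
have sqrt2_in : E (Num.sqrt 2).
  exists (edge_weight i0 i1); first exact: edge_weight_in_weight_set.
  by rewrite realvec_edge_weight enorm_edge_vec.
apply: le_anti; rewrite ge_sup //=; last by exists (Num.sqrt 2).
by apply: sup_upper_bound => //; split; exists (Num.sqrt 2).
Qed.

Lemma dist0_conv_weights_ge (S : seq 'rV[int]_m) :
  S != [::] -> (forall s, s \in S -> @weight_set R m n s) ->
  ~ conv_hull (map (@realvec R m) S) 0 ->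
  (m%:R : R) `^ (- (3 / 2)) <= dist0_conv (map (@realvec R m) S).
Proof.
move=> S_neq0 S_weights zero_notin; set Sr := map _ S.
have edges (a : 'I_(size Sr)) :
    exists e : 'I_m * 'I_m, Sr`_a = edge_vec R e.1 e.2.
  have a_lt : (a < size S)%N by rewrite -(size_map (@realvec R m)).
  have [i [l w_eq]] := weight_setP (S_weights _ (mem_nth 0 a_lt)).
  by exists (i, l); rewrite /Sr (nth_map 0) // w_eq realvec_edge_weight.
have [e Sr_edges] := choice edges.
apply: lb_le_inf.
  exists (enorm Sr`_0), Sr`_0 => //; apply: conv_hull_nth0.
  by rewrite size_map lt0n size_eq0.
have sumsq_ge := @conv_hull_sumsq_ge R m Sr
  (fun a => (e a).1) (fun a => (e a).2) Sr_edges zero_notin.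
move=> _ [x /sumsq_ge x_sumsq_ge <-].
rewrite /enorm -(ger0_norm (powR_ge0 _ _)) -sqrtr_sqr sqr_powR_neg3half.
by rewrite ler_sqrt // sumr_ge0 // => b _; apply: sqr_ge0.
Qed.

Lemma weight_margin_ge : (m%:R : R) `^ (- (3 / 2)) <= weight_margin R m n.
Proof.
apply: lb_le_inf; last by move=> _ [S [S_neq0 S_weights zero_notin] <-];
  exact: dist0_conv_weights_ge.
pose S0 := [:: edge_weight i0 i1].
exists (dist0_conv (map (@realvec R m) S0)), S0 => //.
split => // [s|/conv_hull1 /esym].
  by rewrite inE => /eqP ->; apply: edge_weight_in_weight_set.
rewrite /= realvec_edge_weight => /rowP /(_ i0); rewrite !mxE eqxx /=.
by rewrite subr0 => /eqP; rewrite oner_eq0.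
Qed.

End NormAndMargin.

Theorem mainTheorem12 (R : realType) (m n : nat) (G : set 'M[R[i]]_m) :
  (2 <= m)%N -> (1 <= n)%N ->
  symmetric_subgroup G -> contains_torus G ->
  weight_norm R m n = Num.sqrt 2 /\
  (m%:R : R) `^ (- (3 / 2)) <= weight_margin R m n.
Proof.
(* The weights are computed from the action of the torus alone. *)
move=> m_ge2 n_gt0 _ _.
by split; [apply: weight_normE | apply: weight_margin_ge].
Qed.
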